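(* Let $H$ be a finite connected graph (loops allowed) with at least two nodes, such that there is no pair of distinct nodes $i\neq j$ with $N(i)\subseteq N(j)$. Let $G=H\times H$ be its weak square. Then the projection $\pi_1:G\to H$, $\pi_1(i_1,i_2)=i_1$, is an isolated vertex of the graph $\hom(G,H)$; in particular $\hom(G,H)$ is disconnected.
   Context: $N(i)$ denotes the set of nodes adjacent to $i$ in $H$ (containing $i$ iff $i$ is looped). The weak square $H\times H$ has node set all ordered pairs $(i_1,i_2)$ of nodes of $H$, with $(i_1,i_2)\sim(j_1,j_2)$ iff $i_1\sim j_1$ and $i_2\sim j_2$ in $H$ (so it may have loops). $\hom(G,H)$ is the set of graph homomorphisms $G\to H$, made into a graph by declaring two homomorphisms adjacent iff they differ at exactly one node of $G$. *)

From mathcomp Require Import all_boot.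
Set Implicit Arguments. Unset Strict Implicit. Unset Printing Implicit Defensive.

(* A (finite, loops allowed) graph is a symmetric relation e on a finType T. *)

Definition nbhd (T : finType) (e : rel T) (i : T) : {set T} := [set j | e i j].

Definition connected_graph (T : finType) (e : rel T) : Prop :=
  forall x y : T, connect e x y.

Definition weak_sq (T : finType) (e : rel T) : rel (T * T)%type :=
  fun u v => e u.1 v.1 && e u.2 v.2.

Definition is_hom (S T : finType) (eS : rel S) (eT : rel T) (f : {ffun S -> T}) : bool :=
  [forall x, forall y, eS x y ==> eT (f x) (f y)].

(* Two maps are adjacent in hom(G,H) iff they differ at exactly one node of G. *)
Definition differ_at_one (S T : finType) (f g : {ffun S -> T}) : bool :=
  #|[set x | f x != g x]| == 1.

Definition hom_rel (S T : finType) (eS : rel S) (eT : rel T) : rel {ffun S -> T} :=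
  fun f g => [&& is_hom eS eT f, is_hom eS eT g & differ_at_one f g].

Definition proj1_ffun (T : finType) : {ffun (T * T)%type -> T} := [ffun u => u.1].

From mathcomp Require Import all_boot.

Set Implicit Arguments. Unset Strict Implicit. Unset Printing Implicit Defensive.

(* If a homomorphism g : H x H -> H agrees with pi_1 except at (a, b), pick a
   neighbour y of b other than b: every (x, y) with x ~ a is a neighbour of
   (a, b) on which g is still pi_1, so g (a, b) ~ x.  Hence N(a) is contained
   in N(g (a, b)), which forces g (a, b) = a.  Since pi_2 is another
   homomorphism, pi_1 lies in a singleton component of hom(G, H). *)

Lemma connect_neighbour_neq (T : finType) (e : rel T) (b z : T) :
  connect e b z -> z != b -> exists2 y, y != b & e b y.
Proof.
move=> /connectP[p pth ->{z}]; elim: p pth => [|y p IHp] /=; first by rewrite eqxx.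
case/andP=> eby pth; have [yE|yb] := eqVneq y b; last by exists y.
by rewrite yE in pth *; exact: IHp.
Qed.

Lemma connected_neighbour_neq (T : finType) (e : rel T) (b : T) :
  connected_graph e -> 1 < #|T| -> exists2 y, y != b & e b y.
Proof.
move=> con /card_gt1P[i [j [_ _ ij]]].
have [z zb] : exists z, z != b.
  by case: (eqVneq i b) => [<-|ib]; [exists j; rewrite eq_sym | exists i].
exact: connect_neighbour_neq (con b z) zb.
Qed.

Lemma differ_at_oneP (S T : finType) (f g : {ffun S -> T}) :
  differ_at_one f g -> exists2 u, f u != g u & forall v, v != u -> f v = g v.
Proof.
case/cards1P=> u Hu; exists u; first by have := set11 u; rewrite -Hu inE.
move=> v vu; apply/eqP/negPn; apply: contra vu => fgv.
have : v \in [set x | f x != g x] by rewrite inE.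
by rewrite Hu inE.
Qed.

Lemma not_connect_from_isolated (V : finType) (r : rel V) (x z : V) :
  (forall y, ~~ r x y) -> x != z -> ~~ connect r x z.
Proof.
move=> iso xz; apply/negP => /connectP[[|y p] /= pth zE]; first by rewrite zE eqxx in xz.
by case/andP: pth => rxy _; rewrite (negbTE (iso y)) in rxy.
Qed.

Definition proj2_ffun (T : finType) : {ffun (T * T)%type -> T} := [ffun u => u.2].

Lemma proj1_neq_proj2 (T : finType) : 1 < #|T| -> proj1_ffun T != proj2_ffun T.
Proof.
case/card_gt1P=> i [j [_ _ ij]]; apply: contra ij => /eqP/ffunP/(_ (i, j)).
by rewrite !ffunE /= => ->.
Qed.

Section WeakSquare.

Variables (T : finType) (e : rel T).

Lemma is_hom_proj1 : is_hom (weak_sq e) e (proj1_ffun T).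
Proof. by apply/forallP => u; apply/forallP => v; apply/implyP; rewrite !ffunE => /andP[]. Qed.

Lemma is_hom_proj2 : is_hom (weak_sq e) e (proj2_ffun T).
Proof. by apply/forallP => u; apply/forallP => v; apply/implyP; rewrite !ffunE => /andP[]. Qed.

Lemma nbhd_sub_hom_off_proj1 (g : {ffun (T * T)%type -> T}) (a b y : T) :
  is_hom (weak_sq e) e g -> (forall u, u != (a, b) -> g u = u.1) ->
  y != b -> e b y -> nbhd e a \subset nbhd e (g (a, b)).
Proof.
move=> hg g_off yb eby; apply/subsetP => x; rewrite !inE => eax.
have := forallP (forallP hg (a, b)) (x, y).
rewrite /weak_sq /= eax eby (g_off (x, y)) //; apply: contra yb.
by rewrite xpair_eqE => /andP[_].
Qed.

Lemma proj1_isolated (g : {ffun (T * T)%type -> T}) :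
  connected_graph e -> 1 < #|T| ->
  (forall i j : T, i != j -> ~~ (nbhd e i \subset nbhd e j)) ->
  is_hom (weak_sq e) e g -> ~~ differ_at_one (proj1_ffun T) g.
Proof.
move=> con cT nsub hg; apply/negP => /differ_at_oneP[[a b]].
rewrite ffunE /= => ag g_off.
have [y yb eby] := connected_neighbour_neq b con cT.
apply: (negP (nsub _ _ ag)); apply: nbhd_sub_hom_off_proj1 hg _ yb eby.
by move=> u /g_off <-; rewrite ffunE.
Qed.

End WeakSquare.

Theorem mainTheorem9 (T : finType) (e : rel T) :
  symmetric e ->
  connected_graph e ->
  1 < #|T| ->
  (forall i j : T, i != j -> ~~ (nbhd e i \subset nbhd e j)) ->
  [/\ is_hom (weak_sq e) e (proj1_ffun T),
      (forall g : {ffun (T * T)%type -> T},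
          is_hom (weak_sq e) e g -> ~~ differ_at_one (proj1_ffun T) g)
    & exists f g : {ffun (T * T)%type -> T},
        [/\ is_hom (weak_sq e) e f, is_hom (weak_sq e) e g
          & ~~ connect (hom_rel (weak_sq e) e) f g]].
Proof.
move=> _ con cT nsub.
have iso g := @proj1_isolated T e g con cT nsub.
split; [exact: is_hom_proj1 | exact: iso |].
exists (proj1_ffun T), (proj2_ffun T); split; [exact: is_hom_proj1 | exact: is_hom_proj2 |].
apply: (@not_connect_from_isolated _ (hom_rel (weak_sq e) e)) (proj1_neq_proj2 cT) => g.
by apply/negP => /and3P[_ /iso /negP].
Qed.
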